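(* Let $m\ge2$. For $p=1,\dots,m$ let $C^p=\bigoplus_{i=1}^sC^p_i$ be an orthogonal direct sum of finite-dimensional Hilbert spaces and $A^p\in\mathcal{L}(C^p)$ positive definite. Let $f_p\in\mathcal{H}_{A^p}\setminus\{0\}$, $p=1,\dots,m$. Then the simple tensor $f_1\otimes\cdots\otimes f_m\in\bigotimes_p\mathcal{H}_{A^p}$ is extremal if and only if there exists $i\in\{1,\dots,s\}$ such that $f_p\in A^p(C^p_i)$ for every $p=1,\dots,m$.
   Context: $\mathcal{H}_{A^p}$ is $C^p$ with inner product $\langle x,y\rangle=\langle (A^p)^{-1}x,y\rangle_{C^p}$. $\bigotimes_p\mathcal{H}_{A^p}$ is the Hilbert tensor product. Let $\phi^*:\bigotimes_p\mathcal{H}_{A^p}\to\bigoplus_{i=1}^sC^1_i\otimes\cdots\otimes C^m_i$ be the linear map with $\phi^*(f_1\otimes\cdots\otimes f_m)=(f_1(i)\otimes\cdots\otimes f_m(i))_{i=1}^s$, where $f(i)$ denotes the $C^p_i$-component of $f\in C^p$. Equip the range of $\phi^*$ with the range norm $\|\phi^*F\|=\inf\{\|G\|:\phi^*G=\phi^*F\}$ (this is the Hadamard product RKHS). An element $F$ is called extremal (for $m\ge2$) if $\|\phi^*F\|=\|F\|_{\bigotimes_p\mathcal{H}_{A^p}}$, equivalently $F\in(\ker\phi^* )^\perp$. *)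

From HB Require Import structures.
From mathcomp Require Import all_boot all_order all_algebra.
Set Implicit Arguments. Unset Strict Implicit. Unset Printing Implicit Defensive.
Import Order.TTheory GRing.Theory Num.Theory.
Local Open Scope ring_scope.

(* The Hilbert space C^p = (+)_{i<s} C^p_i is realized (up to a unitary
   isomorphism) as 'cV[C]_(n p) with the standard inner product
   <x,y> = \sum_k x_k (y_k)^*, and C^p_i is the coordinate subspace spanned by
   the basis vectors k with blk p k = i (blk : 'I_(n p) -> 'I_s). *)

Definition cdot (C : numClosedFieldType) n (u v : 'cV[C]_n) : C :=
  \sum_(k < n) u k 0 * (v k 0)^*.

Definition posdef (C : numClosedFieldType) n (A : 'M[C]_n) : Prop :=
  forall v : 'cV[C]_n, v != 0 -> 0 < cdot (A *m v) v.

Definition inblock (C : numClosedFieldType) n s (blk : 'I_n -> 'I_s) (i : 'I_s)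
  (v : 'cV[C]_n) : Prop := forall k, blk k != i -> v k 0 = 0.

Definition inimage (C : numClosedFieldType) n s (A : 'M[C]_n)
  (blk : 'I_n -> 'I_s) (i : 'I_s) (f : 'cV[C]_n) : Prop :=
  exists v : 'cV[C]_n, inblock blk i v /\ f = A *m v.

Definition tidx (m : nat) (n : 'I_m -> nat) : finType :=
  {dffun forall p : 'I_m, 'I_(n p)}.

(* elements of (x)_p C^p are coordinate functions on multi-indices *)
Definition tensor (C : numClosedFieldType) m (n : 'I_m -> nat) := tidx n -> C.

Definition stensor (C : numClosedFieldType) m (n : 'I_m -> nat)
  (f : forall p : 'I_m, 'cV[C]_(n p)) : tensor C n :=
  fun x => \prod_(p < m) f p (x p) 0.

(* inner product of the Hilbert tensor product (x)_p H_{A^p}: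
   <F, G> = < ((x)_p (A^p)^{-1}) F, G > *)
Definition tdot (C : numClosedFieldType) m (n : 'I_m -> nat)
  (A : forall p : 'I_m, 'M[C]_(n p)) (F G : tensor C n) : C :=
  \sum_(x : tidx n) \sum_(y : tidx n)
     (\prod_(p < m) invmx (A p) (x p) (y p)) * F y * (G x)^*.

Definition tnorm2 (C : numClosedFieldType) m (n : 'I_m -> nat)
  (A : forall p : 'I_m, 'M[C]_(n p)) (F : tensor C n) : C := tdot A F F.

(* phi^* F = (F restricted to C^1_i (x) ... (x) C^m_i)_{i<s}; the i-th
   component is represented as the tensor supported on the multi-indices
   x with blk p (x p) = i for all p. *)
Definition phistar (C : numClosedFieldType) m s (n : 'I_m -> nat)
  (blk : forall p : 'I_m, 'I_(n p) -> 'I_s) (F : tensor C n) :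
  'I_s -> tensor C n :=
  fun i x => if [forall p, blk p (x p) == i] then F x else 0.

(* extremal: ||phi^* F|| (range norm = inf { ||G|| : phi^* G = phi^* F })
   equals ||F||, i.e. F has minimal norm among all G with phi^* G = phi^* F
   (stated with squared norms). *)
Definition extremal (C : numClosedFieldType) m s (n : 'I_m -> nat)
  (A : forall p : 'I_m, 'M[C]_(n p)) (blk : forall p : 'I_m, 'I_(n p) -> 'I_s)
  (F : tensor C n) : Prop :=
  forall G : tensor C n, phistar blk G = phistar blk F -> tnorm2 A F <= tnorm2 A G.

From Stdlib Require Import FunctionalExtensionality.
From HB Require Import structures.
From mathcomp Require Import all_boot all_order all_algebra.
From mathcomp Require Import sesquilinear spectral ring.
Import Order.TTheory GRing.Theory Num.Theory.
Set Implicit Arguments. Unset Strict Implicit. Unset Printing Implicit Defensive.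
Local Open Scope ring_scope.
Local Open Scope sesquilinear_scope.

(* Put g_p := (A^p)^-1 f_p.  The inner product of the Hilbert tensor product
   against F := f_1 (x) ... (x) f_m is <F, H> = \sum_x g(x) conj(H x) with
   g := g_1 (x) ... (x) g_m, and it is positive semidefinite because each
   (A^p)^-1 = U^* D U with D > 0.  Hence F is extremal iff it is orthogonal to
   ker phi^*, the tensors vanishing on the multi-indices x whose coordinates all
   lie in one block, iff g vanishes off those multi-indices.  For nonzero g_p
   and m >= 2 this happens iff all g_p live in a common block C^p_i, i.e.
   f_p = A^p g_p lies in A^p(C^p_i). *)

Lemma conjC_of_real_sesqui (C : numClosedFieldType) (a b : C) :
  (forall c : C, c * a + c^* * b \is Num.real) -> b = a^*.
Proof.
move=> hreal.
have /CrealP := hreal 1; have /CrealP := hreal 'i.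
rewrite !rmorphD !rmorphM /= !conjCK conjCi conjC1 !mul1r => E2 E1.
have ii : 'i * 'i = -1 :> C by rewrite -expr2 sqrCi.
suff : (b - a^*) *+ 2 = 0 by move/eqP; rewrite mulrn_eq0 /= subr_eq0 => /eqP.
have -> : (b - a^*) *+ 2 = (a + b - (a^* + b^*))
   + 'i * ('i * a + - 'i * b - (- 'i * a^* + 'i * b^*))
   - (1 + 'i * 'i) * (a - b + a^* - b^*).
  by ring.
by rewrite E1 E2 ii !subrr mulr0 mul0r subr0 add0r.
Qed.

Section Cdot.
Variables (C : numClosedFieldType) (n : nat).
Implicit Types u v : 'cV[C]_n.

Lemma cdotE u v : cdot u v = (v^t* *m u) 0 0.
Proof. by rewrite /cdot mxE; apply: eq_bigr => k _; rewrite !mxE mulrC. Qed.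

Lemma cdot0l v : cdot 0 v = 0.
Proof. by rewrite cdotE mulmx0 mxE. Qed.

Lemma cdotDl u1 u2 v : cdot (u1 + u2) v = cdot u1 v + cdot u2 v.
Proof. by rewrite !cdotE mulmxDr mxE. Qed.

Lemma cdotDr u v1 v2 : cdot u (v1 + v2) = cdot u v1 + cdot u v2.
Proof. by rewrite !cdotE linearD map_mxD mulmxDl mxE. Qed.

Lemma cdotZl c u v : cdot (c *: u) v = c * cdot u v.
Proof. by rewrite !cdotE -scalemxAr mxE. Qed.

Lemma cdotZr c u v : cdot u (c *: v) = c^* * cdot u v.
Proof. by rewrite !cdotE linearZ map_mxZ /= -scalemxAl mxE. Qed.

Lemma cdot_delta u k : cdot u (delta_mx k 0) = u k 0.
Proof. by rewrite cdotE trmx_delta map_delta_mx -rowE mxE. Qed.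
End Cdot.

Section PositiveDefinite.
Variables (C : numClosedFieldType) (n : nat) (A : 'M[C]_n).
Hypothesis posA : posdef A.

Lemma posdef_cdot_real v : cdot (A *m v) v \is Num.real.
Proof.
have [->|/posA/gtr0_real//] := eqVneq v 0.
by rewrite mulmx0 cdot0l real0.
Qed.

Lemma posdef_hermitian : A^t* = A.
Proof.
apply/matrixP => j k; rewrite !mxE; apply/esym.
pose e l : 'cV[C]_n := delta_mx l 0.
have diag_real l : A l l \is Num.real.
  by have := posdef_cdot_real (e l); rewrite -colE cdot_delta mxE.
apply: conjC_of_real_sesqui => c.
have quad : cdot (A *m (e k + c *: e j)) (e k + c *: e j) =
    A k k + (c * A k j + c^* * A j k) + c * c^* * A j j.
  rewrite mulmxDr -scalemxAr /e -!colE.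
  rewrite !(cdotDl, cdotDr, cdotZl, cdotZr) !cdot_delta !mxE.
  by ring.
have -> : c * A k j + c^* * A j k =
    cdot (A *m (e k + c *: e j)) (e k + c *: e j) - A k k - c * c^* * A j j.
  by rewrite quad; ring.
rewrite !rpredB ?posdef_cdot_real ?diag_real //.
by rewrite rpredM ?diag_real // ger0_real // mul_conjC_ge0.
Qed.

Lemma posdef_spectralE :
  A = (spectralmx A)^t* *m diag_mx (spectral_diag A) *m spectralmx A.
Proof.
rewrite -invmx_unitary ?spectral_unitarymx //; apply/orthomx_spectralP.
by apply/normalmxP; rewrite posdef_hermitian.
Qed.

Let P := spectralmx A.
Let X := spectral_diag A.

Let PPt : P *m P^t* = 1%:M.
Proof. exact/unitarymxP/spectral_unitarymx. Qed.

Lemma posdef_spectral_diag_gt0 k : 0 < X 0 k.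
Proof.
pose w : 'cV[C]_n := P^t* *m delta_mx k 0.
have wt : w^t* = delta_mx 0 k *m P.
  by rewrite trmx_mul map_mxM trmxCK trmx_delta map_delta_mx.
have w_neq0 : w != 0.
  apply: contraTneq isT => w0.
  have := congr1 (mulmx P) w0; rewrite mulmx0 /w mulmxA PPt mul1mx.
  by move/matrixP/(_ k 0); rewrite !mxE !eqxx => /eqP; rewrite oner_eq0.
have := posA w_neq0; rewrite cdotE wt {1}posdef_spectralE -/P -/X /w.
rewrite !mulmxA -[_ *m P *m P^t*]mulmxA PPt mulmx1.
rewrite -[_ *m P *m P^t*]mulmxA PPt mulmx1 -rowE -colE.
by rewrite !mxE eqxx mulr1n.
Qed.

Lemma posdef_spectral_inv_mulmx :
  P^t* *m diag_mx (\row_k (X 0 k)^-1) *m P *m A = 1%:M.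
Proof.
rewrite {1}posdef_spectralE -/P -/X !mulmxA.
rewrite -[_ *m P *m P^t*]mulmxA PPt mulmx1 -[_ *m diag_mx X]mulmxA mulmx_diag.
have -> : diag_mx (\row_j ((\row_k (X 0 k)^-1) 0 j * X 0 j)) = 1%:M.
  apply/matrixP => i j; rewrite !mxE; case: (i == j) => //.
  by rewrite mulVf ?gt_eqF ?posdef_spectral_diag_gt0.
by rewrite mulmx1 mulmx1C.
Qed.

Lemma posdef_unitmx : A \in unitmx.
Proof. by have [] := mulmx1_unit posdef_spectral_inv_mulmx. Qed.

Lemma invmx_posdefE a b : invmx A a b = \sum_k (P k a)^* * (X 0 k)^-1 * P k b.
Proof.
have /(congr1 (mulmx^~ (invmx A))) := posdef_spectral_inv_mulmx.
rewrite mulmxK ?posdef_unitmx // mul1mx => <-.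
by rewrite mul_mx_diag !mxE; apply: eq_bigr => k _; rewrite !mxE.
Qed.

Lemma posdef_conj_invmx a b : (invmx A a b)^* = invmx A b a.
Proof.
rewrite !invmx_posdefE rmorph_sum; apply: eq_bigr => k _.
rewrite !rmorphM /= conjCK geC0_conj; first by ring.
by rewrite invr_ge0 ltW ?posdef_spectral_diag_gt0.
Qed.
End PositiveDefinite.

Lemma prod_sum_tidx (R : comNzRingType) m (n : 'I_m -> nat)
    (F : forall p : 'I_m, 'I_(n p) -> R) :
  \prod_(p < m) \sum_(j < n p) F p j =
  \sum_(x : tidx n) \prod_(p < m) F p (x p).
Proof.
pose P_ p := [ffun j : 'I_(n p) => F p j].
transitivity (\prod_(p < m) \sum_(j in tagged_with (fun p => 'I_(n p)) p)
                untag 0 (P_ p) j).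
  apply: eq_bigr => p _; rewrite -(big_tag (fun p => P_ p)).
  by apply: eq_bigr => j _; rewrite ffunE.
rewrite bigA_distr_big_dep -(big_fprod _ _ P_).
rewrite (reindex (@fprod_of_dffun _ (fun p => 'I_(n p)))); last first.
  exact/onW_bij/fprod_of_dffun_bij.
apply: eq_bigr => x _; apply: eq_bigr => p _.
by rewrite ffunE /fprod_of_dffun fprodE.
Qed.

Section TensorForm.
Variables (C : numClosedFieldType) (m : nat) (n : 'I_m -> nat).
Variable A : forall p : 'I_m, 'M[C]_(n p).
Hypothesis posA : forall p, posdef (A p).
Implicit Types F G H : tensor C n.

Lemma tnorm2D F H :
  tnorm2 A (fun x => F x + H x) =
  tnorm2 A F + tdot A F H + tdot A H F + tnorm2 A H.
Proof.
rewrite /tnorm2 /tdot -!big_split; apply: eq_bigr => x _; rewrite -!big_split.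
by apply: eq_bigr => y _ /=; rewrite rmorphD; ring.
Qed.

Lemma tdotZl c F H : tdot A (fun x => c * F x) H = c * tdot A F H.
Proof.
rewrite /tdot mulr_sumr; apply: eq_bigr => x _; rewrite mulr_sumr.
by apply: eq_bigr => y _; ring.
Qed.

Lemma tdotZr c F H : tdot A F (fun x => c * H x) = c^* * tdot A F H.
Proof.
rewrite /tdot mulr_sumr; apply: eq_bigr => x _; rewrite mulr_sumr.
by apply: eq_bigr => y _; rewrite rmorphM; ring.
Qed.

Lemma conj_tdot F G : (tdot A F G)^* = tdot A G F.
Proof.
rewrite /tdot rmorph_sum exchange_big; apply: eq_bigr => y _.
rewrite rmorph_sum; apply: eq_bigr => x _.
rewrite !rmorphM rmorph_prod /= conjCK.
under eq_bigr do rewrite posdef_conj_invmx //.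
by rewrite mulrAC.
Qed.

Lemma tdot_stensor f H :
  tdot A (stensor f) H =
  \sum_(x : tidx n) stensor (fun p => invmx (A p) *m f p) x * (H x)^*.
Proof.
apply: eq_bigr => x _; rewrite -mulr_suml; congr (_ * _).
rewrite /stensor; under [RHS]eq_bigr do rewrite mxE.
rewrite prod_sum_tidx; apply: eq_bigr => y _.
by rewrite -big_split.
Qed.

Let V (k x : tidx n) := \prod_(p < m) spectralmx (A p) (k p) (x p).
Let W (k : tidx n) := \prod_(p < m) (spectral_diag (A p) 0 (k p))^-1.

Let prod_invmx_gram (x y : tidx n) :
  \prod_(p < m) invmx (A p) (x p) (y p) = \sum_k W k * ((V k x)^* * V k y).
Proof.
under eq_bigr do rewrite invmx_posdefE //.
rewrite prod_sum_tidx; apply: eq_bigr => k _.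
rewrite /W /V rmorph_prod -!big_split /=; apply: eq_bigr => p _.
by ring.
Qed.

Lemma tnorm2_ge0 H : 0 <= tnorm2 A H.
Proof.
pose VH k := \sum_y V k y * H y.
have -> : tnorm2 A H = \sum_k W k * (VH k * (VH k)^*).
  rewrite /tnorm2 /tdot.
  under eq_bigr do under eq_bigr do rewrite prod_invmx_gram !mulr_suml.
  under eq_bigr do rewrite exchange_big.
  rewrite exchange_big; apply: eq_bigr => k _.
  rewrite /VH rmorph_sum /= big_distrl /= mulr_sumr exchange_big.
  apply: eq_bigr => y _; rewrite !mulr_sumr; apply: eq_bigr => x _.
  by rewrite rmorphM; ring.
apply: sumr_ge0 => k _; rewrite mulr_ge0 ?mul_conjC_ge0 //.
by apply: prodr_ge0 => p _; rewrite invr_ge0 ltW ?posdef_spectral_diag_gt0.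
Qed.
End TensorForm.

Definition same_block m s (n : 'I_m -> nat)
  (blk : forall p : 'I_m, 'I_(n p) -> 'I_s) (x : tidx n) : bool :=
  [exists i, [forall p, blk p (x p) == i]].

Section Extremal.
Variables (C : numClosedFieldType) (m s : nat) (n : 'I_m -> nat).
Variable blk : forall p : 'I_m, 'I_(n p) -> 'I_s.
Variable A : forall p : 'I_m, 'M[C]_(n p).
Hypothesis posA : forall p, posdef (A p).
Implicit Types F G H : tensor C n.

Lemma phistar_eqP G F :
  phistar blk G = phistar blk F <-> forall x, same_block blk x -> G x = F x.
Proof.
split=> [eqGF x /existsP[i xi]|eqGF].
  by have := congr1 (fun K => K i x) eqGF; rewrite /phistar xi.
apply: functional_extensionality => i; apply: functional_extensionality => x.
rewrite /phistar; case: ifP => // xi.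
by apply: eqGF; apply/existsP; exists i.
Qed.

Lemma extremal_orthoP F :
  extremal A blk F <->
  forall H, (forall x, same_block blk x -> H x = 0) -> tdot A F H = 0.
Proof.
split=> [extF H H0|orthoF G /phistar_eqP eqGF].
  set a := tdot A F H; apply/eqP; apply: contraT => a_neq0.
  pose c := (tnorm2 A H + 1)^-1.
  have c_gt0 : 0 < c by rewrite invr_gt0 ltr_wpDl ?tnorm2_ge0.
  have cH_lt1 : c * tnorm2 A H < 1.
    by rewrite mulrC ltr_pdivrMr ?ltr_wpDl ?tnorm2_ge0 // mul1r ltrDl ltr01.
  (* Moving F along H by t decreases its norm by c |a|^2 (2 - c ||H||^2) > 0. *)
  pose t := - (c * a).
  have eq_phistar : phistar blk (fun x => F x + t * H x) = phistar blk F.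
    by apply/phistar_eqP => x /H0 ->; rewrite mulr0 addr0.
  have := extF _ eq_phistar.
  rewrite tnorm2D /tnorm2 !(tdotZl, tdotZr) -(conj_tdot posA F H) -/a.
  rewrite -!addrA lerDl.
  have -> : t^* * a + (t * a^* + t * (t^* * tdot A H H)) =
      - ((c * (a * a^*)) * (2 - c * tnorm2 A H)).
    by rewrite /t /tnorm2 rmorphN rmorphM /= geC0_conj ?ltW //; ring.
  have ca_gt0 : 0 < c * (a * a^*) by rewrite mulr_gt0 // mul_conjC_gt0.
  rewrite oppr_ge0 pmulr_rle0 // subr_le0 => /le_lt_trans/(_ cH_lt1).
  by rewrite ltrn1.
pose H x := G x - F x.
have -> : G = fun x => F x + H x.
  by apply: functional_extensionality => x; rewrite /H addrC subrK.
have H0 x : same_block blk x -> H x = 0.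
  by move/eqGF; rewrite /H => ->; rewrite subrr.
rewrite tnorm2D -(conj_tdot posA F H) orthoF // conjC0 !addr0 lerDl.
exact: tnorm2_ge0 posA H.
Qed.

Lemma extremal_stensorP f :
  extremal A blk (stensor f) <->
  forall x, ~~ same_block blk x -> stensor (fun p => invmx (A p) *m f p) x = 0.
Proof.
split=> [/extremal_orthoP ortho x x_nsb|supp]; last first.
  apply/extremal_orthoP => H H0; rewrite tdot_stensor big1 // => x _.
  have [/H0 ->|/supp ->] := boolP (same_block blk x).
    by rewrite conjC0 mulr0.
  by rewrite mul0r.
pose d y : C := (y == x)%:R.
have := ortho d; rewrite tdot_stensor (bigD1 x) //= big1 => [|y /negbTE yx].
  rewrite /d eqxx conjC1 mulr1 addr0; apply=> y.
  by case: eqP => [->|//]; rewrite (negbTE x_nsb).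
by rewrite /d yx conjC0 mulr0.
Qed.
End Extremal.

Lemma stensor_supp_same_blockP (C : numClosedFieldType) (m s : nat)
    (n : 'I_m -> nat) (blk : forall p : 'I_m, 'I_(n p) -> 'I_s)
    (g : forall p : 'I_m, 'cV[C]_(n p)) :
  (1 < m)%N -> (forall p, g p != 0) ->
  (forall x, ~~ same_block blk x -> stensor g x = 0) <->
  exists i : 'I_s, forall p : 'I_m, inblock (blk p) i (g p).
Proof.
move=> m_gt1 g_neq0; split=> [supp|[i gi] x]; last first.
  apply: contraNeq => /prodf_neq0 gx.
  apply/existsP; exists i; apply/forallP => p.
  by apply: contraR (gx p isT) => /(gi p) ->.
have supp_same x : stensor g x != 0 -> same_block blk x.
  by apply: contraR => /supp ->.
have [k0 k0P] : exists k0 : tidx n, forall p, g p (k0 p) 0 != 0.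
  have kex p : exists k, g p k 0 != 0.
    apply/existsP; apply: contraR (g_neq0 p) => /existsPn g0.
    by apply/eqP/matrixP => k j; rewrite ord1 mxE; apply/eqP/negPn/g0.
  exists (finfun (fun p => xchoose (kex p))) => p.
  by rewrite ffunE; exact: (xchooseP (kex p)).
have /existsP[i /forallP k0i] : same_block blk k0.
  by apply/supp_same/prodf_neq0 => p _; apply: k0P.
(* Changing the p-th coordinate of k0 to any k in the support of g p stays in
   the support of g, and some other coordinate q still pins the block to i. *)
exists i => p k; apply: contraNeq => gk.
pose x1 : tidx n := finfun (dfwith k0 k).
have /existsP[j /forallP x1j] : same_block blk x1.
  apply/supp_same/prodf_neq0 => q _; rewrite ffunE.
  by case: dfwithP => [|q' _]; [exact: gk | exact: k0P].
have [q q_neq_p] : exists q : 'I_m, q != p.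
  have m_gt0 : (0 < m)%N by apply: ltnW.
  case: (eqVneq p (Ordinal m_gt0)) => [->|p_neq0].
    by exists (Ordinal m_gt1); rewrite -val_eqE.
  by exists (Ordinal m_gt0); rewrite eq_sym.
move: (x1j p) (x1j q) (k0i q); rewrite !ffunE dfwith_in dfwith_out 1?eq_sym //.
by move=> /eqP -> /eqP <-.
Qed.

Lemma inimage_invmxP (C : numClosedFieldType) n s (A : 'M[C]_n)
    (blk : 'I_n -> 'I_s) i (f : 'cV[C]_n) :
  A \in unitmx -> inimage A blk i f <-> inblock blk i (invmx A *m f).
Proof.
move=> A_unit; split=> [[v [vi ->]]|fi]; first by rewrite mulKmx.
by exists (invmx A *m f); rewrite mulKVmx.
Qed.

Theorem mainTheorem7 (C : numClosedFieldType) (m s : nat) (n : 'I_m -> nat)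
  (blk : forall p : 'I_m, 'I_(n p) -> 'I_s)
  (A : forall p : 'I_m, 'M[C]_(n p))
  (f : forall p : 'I_m, 'cV[C]_(n p)) :
  (2 <= m)%N ->
  (forall p, posdef (A p)) ->
  (forall p, f p != 0) ->
  extremal A blk (stensor f) <->
  exists i : 'I_s, forall p : 'I_m, inimage (A p) (blk p) i (f p).
Proof.
move=> m_ge2 posA f_neq0.
have A_unit p : A p \in unitmx := posdef_unitmx (posA p).
have g_neq0 p : invmx (A p) *m f p != 0.
  apply: contraNneq (f_neq0 p) => g0.
  by rewrite -(mulKVmx (A_unit p) (f p)) g0 mulmx0.
rewrite (extremal_stensorP blk posA).
rewrite (stensor_supp_same_blockP blk m_ge2 g_neq0).
by split=> -[i fi]; exists i => p; apply/(inimage_invmxP _ _ _ (A_unit p)).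
Qed.
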